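(* Let $G$ be an unweighted digraph without loops, let $0<\tau\le1$, and let $M_\tau(t)=I-At+(D-\tau I)\tau t^2+(A-S)\tau^2t^3$. Then $1/\tau$ is always an eigenvalue of $M_\tau(t)$ and its geometric multiplicity equals the number of connected components of the undirected part $G_U$. Moreover, $-1/\tau$ is an eigenvalue of $M_\tau(t)$ if and only if $G_U$ has at least one bipartite connected component, and then its geometric multiplicity equals the number of bipartite connected components of $G_U$.
   Context: $G=(V,E)$ with adjacency matrix $A$, $S=A\circ A^T$, $D=\mathrm{diag}(\mathrm{diag}(A^2))$. The undirected part $G_U$ is the undirected graph on $V$ with edge $\{i,j\}$ iff both $(i,j),(j,i)\in E$; isolated vertices count as (bipartite) connected components. The geometric multiplicity of an eigenvalue $\lambda$ of $M_\tau(t)$ is $\dim\ker M_\tau(\lambda)$. *)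

From HB Require Import structures.
From mathcomp Require Import all_boot all_order all_algebra.
Set Implicit Arguments. Unset Strict Implicit. Unset Printing Implicit Defensive.
Import Order.TTheory GRing.Theory Num.Theory.
Local Open Scope ring_scope.

(* A digraph G on vertex set 'I_n is given by its edge relation E
   ((i,j) \in E iff E i j).  Loop-freeness is the hypothesis irreflexive E. *)

Definition adjmx (R : ringType) (n : nat) (E : rel 'I_n) : 'M[R]_n :=
  \matrix_(i, j) (E i j)%:R.

Definition Smx (R : ringType) (n : nat) (A : 'M[R]_n) : 'M[R]_n :=
  \matrix_(i, j) (A i j * A^T i j).

Definition Dmx (R : ringType) (n : nat) (A : 'M[R]_n) : 'M[R]_n :=
  \matrix_(i, j) ((i == j)%:R * (A *m A) i i).

Definition Mtau (R : comRingType) (n : nat) (E : rel 'I_n) (tau t : R) : 'M[R]_n :=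
  let A := adjmx R E in
  1%:M - t *: A + (tau * t ^+ 2) *: (Dmx A - tau%:M)
       + (tau ^+ 2 * t ^+ 3) *: (A - Smx A).

Definition is_eigenvalue (R : comRingType) (n : nat) (M : R -> 'M[R]_n) (l : R) :=
  \det (M l) = 0.

(* dim ker M = dim { v column vector | M v = 0 }; computed as the dimension of
   the row kernel of M^T (u *m M^T = 0 iff M *m u^T = 0). *)
Definition dim_ker (F : fieldType) (n : nat) (M : 'M[F]_n) : nat :=
  \rank (kermx M^T).

Definition geom_mult (F : fieldType) (n : nat) (M : F -> 'M[F]_n) (l : F) : nat :=
  dim_ker (M l).

Definition urel (n : nat) (E : rel 'I_n) : rel 'I_n := fun i j => E i j && E j i.

(* connected components of G_U (isolated vertices included), represented by
   their canonical roots *)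
Definition ucomp_roots (n : nat) (E : rel 'I_n) : {set 'I_n} :=
  [set r | roots (urel E) r].

Definition num_ucomp (n : nat) (E : rel 'I_n) : nat := #|ucomp_roots E|.

Definition bip_comp (n : nat) (E : rel 'I_n) (r : 'I_n) : bool :=
  [exists f : {ffun 'I_n -> bool}, [forall i, forall j,
     (connect (urel E) r i && urel E i j) ==> (f i != f j)]].

Definition num_bip_ucomp (n : nat) (E : rel 'I_n) : nat :=
  #|[set r in ucomp_roots E | bip_comp E r]|.

(* Let W = S be the adjacency matrix of the undirected part G_U and udeg its
   degree vector, so that D = diag(udeg).  For s = +-1 we have s^3 = s, the
   linear and cubic terms cancel, and
       M_tau(s/tau) = tau^-1 L(-s),   where L(eps) := diag(udeg) + eps W;
   L(-1) is the Laplacian and L(1) the signless Laplacian of G_U.  Since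
   eps^2 = 1, 2 v L(eps) v^T = sum_ij W_ij (v_i + eps v_j)^2, so over an ordered
   field the kernel of L(eps) consists exactly of the "eps-balanced" vectors,
   with v_i + eps v_j = 0 on every edge.  Such a vector is determined by its
   values at the roots of a set C of components, which yields an explicit
   basis of the kernel and dim ker L(eps) = #|C|: C is the set of all
   components for the Laplacian (balanced = locally constant), and the set of
   bipartite components for the signless Laplacian (balanced = alternating
   along edges, hence zero on non-bipartite components). *)

From HB Require Import structures.
From mathcomp Require Import all_boot all_order all_algebra.
From mathcomp Require Import ring.
Set Implicit Arguments. Unset Strict Implicit. Unset Printing Implicit Defensive.
Import Order.TTheory GRing.Theory Num.Theory.
Local Open Scope ring_scope.

Lemma rank_kermx_basis (F : fieldType) k n m (L : 'M[F]_(n, m))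
    (B : 'M[F]_(k, n)) (K : 'M[F]_(n, k)) :
  B *m K = 1%:M -> B *m L = 0 ->
  (forall v : 'rV_n, v *m L = 0 -> v = v *m K *m B) -> \rank (kermx L) = k.
Proof.
move=> BK BL ker_span.
have freeB : row_free B by apply/row_freeP; exists K.
suff /eqmx_rank -> : (kermx L == B)%MS by exact/eqP.
apply/andP; split; last by rewrite sub_kermx BL.
apply/row_subP => i; rewrite (ker_span (row i (kermx L))) ?submxMl //.
by rewrite -row_mul mulmx_ker row0.
Qed.

Lemma det_eq0_kermx (F : fieldType) n (M : 'M[F]_n) :
  \det M = 0 <-> (0 < \rank (kermx M))%N.
Proof.
rewrite mxrank_ker subn_gt0 ltn_neqAle rank_leq_row andbT.
rewrite -[\rank M == n]/(row_free M) row_free_unit unitmxE unitfE negbK.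
by split => /eqP.
Qed.

Lemma eigenvalue_geom_mult (F : fieldType) n (M : F -> 'M[F]_n) (l : F) :
  is_eigenvalue M l <-> (0 < geom_mult M l)%N.
Proof. by rewrite /is_eigenvalue /geom_mult /dim_ker -det_tr; apply: det_eq0_kermx. Qed.

Lemma sum_delta (R : pzSemiRingType) (I : finType) (j : I) (F : I -> R) :
  \sum_i (i == j)%:R * F i = F j.
Proof.
rewrite (bigD1 j) //= eqxx mul1r big1 ?addr0 // => i /negbTE ->.
by rewrite mul0r.
Qed.

Lemma connect_ind (T : finType) (e : rel T) (P : T -> Prop) r :
  P r -> (forall x y, connect e r x -> e x y -> P x -> P y) ->
  forall y, connect e r y -> P y.
Proof.
move=> Pr P_step y /connectP [p r_p ->]; elim/last_ind: p r_p => //= p z IHp.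
rewrite rcons_path last_rcons => /andP [r_p p_z].
by apply: (P_step (last r p)) (IHp r_p) => //; apply/connectP; exists p.
Qed.

Section UndirectedPart.
Variables (n : nat) (E : rel 'I_n).
Local Notation croot := (fingraph.root (urel E)).

Lemma urel_sym : symmetric (urel E).
Proof. by move=> i j; rewrite /urel andbC. Qed.

Lemma urel_connect_sym : connect_sym (urel E).
Proof. exact/sym_connect_sym/urel_sym. Qed.

Lemma connect_croot j : connect (urel E) (croot j) j.
Proof. by rewrite urel_connect_sym connect_root. Qed.

Lemma croot_croot j : croot (croot j) = croot j.
Proof. exact/root_root/urel_connect_sym. Qed.

Lemma croot_edge i j : urel E i j -> croot i = croot j.
Proof. by move=> eij; apply/(fingraph.rootP urel_connect_sym)/connect1. Qed.

Lemma mem_ucomp_roots x : (x \in ucomp_roots E) = (croot x == x).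
Proof. by rewrite inE. Qed.

Lemma croot_ucomp_roots j : croot j \in ucomp_roots E.
Proof. by rewrite mem_ucomp_roots croot_croot. Qed.

Definition bip_colouring r : {ffun 'I_n -> bool} :=
  odflt [ffun=> true] [pick f : {ffun 'I_n -> bool} | [forall i, forall j,
     (connect (urel E) r i && urel E i j) ==> (f i != f j)]].

Lemma bip_colouringP r : bip_comp E r ->
  forall i j, connect (urel E) r i -> urel E i j ->
  bip_colouring r i != bip_colouring r j.
Proof.
rewrite /bip_comp /bip_colouring.
case: pickP => [f /forallP proper_f _ | no_colouring /existsP [f proper_f]]; last first.
  by have := no_colouring f; rewrite proper_f.
by move=> i j ri eij; have /forallP/(_ j)/implyP := proper_f i; apply; rewrite ri eij.
Qed.

End UndirectedPart.

Section SignedLaplacian.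
Variables (R : realFieldType) (n : nat) (E : rel 'I_n).
Local Notation croot := (fingraph.root (urel E)).

Definition uadj i j : R := (urel E i j)%:R.
Definition udeg i : R := \sum_k uadj i k.

Definition signed_lap (eps : R) : 'M[R]_n :=
  \matrix_(i, j) ((i == j)%:R * udeg i + eps * uadj i j).

Lemma uadj_sym i j : uadj i j = uadj j i.
Proof. by rewrite /uadj urel_sym. Qed.

Lemma uadj0 i j : ~~ urel E i j -> uadj i j = 0.
Proof. by rewrite /uadj => /negbTE ->. Qed.

Lemma Smx_adjmx : Smx (adjmx R E) = \matrix_(i, j) uadj i j.
Proof. by apply/matrixP => i j; rewrite !mxE /uadj -natrM mulnb. Qed.

Lemma Dmx_adjmx : Dmx (adjmx R E) = \matrix_(i, j) ((i == j)%:R * udeg i).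
Proof.
apply/matrixP => i j; rewrite !mxE; congr (_ * _).
by apply: eq_bigr => k _; rewrite !mxE /uadj -natrM mulnb.
Qed.

(* At t = s/tau with s^2 = 1 the cubic term cancels the linear one, since
   s^3 = s, and M_tau(s/tau) = tau^-1 (D - s S) = tau^-1 L(-s). *)
Lemma Mtau_unit_root (tau s : R) : tau != 0 -> s ^+ 2 = 1 ->
  (Mtau E tau (s * tau^-1))^T = tau^-1 *: signed_lap (- s).
Proof.
move=> tau0 s2; rewrite /Mtau Dmx_adjmx Smx_adjmx.
apply/matrixP => i j; rewrite !mxE eq_sym uadj_sym.
have -> : (i == j)%:R * udeg j = (i == j)%:R * udeg i :> R.
  by case: eqP => [-> | _]; rewrite ?mul0r.
have s3 : s ^+ 3 = s by rewrite exprS s2 mulr1.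
by rewrite !exprMn s3 s2 -mulr_natr; field.
Qed.

Lemma geom_mult_unit_root (tau s : R) : tau != 0 -> s ^+ 2 = 1 ->
  geom_mult (Mtau E tau) (s * tau^-1) = \rank (kermx (signed_lap (- s))).
Proof.
move=> tau0 s2; rewrite /geom_mult /dim_ker Mtau_unit_root //.
by rewrite !mxrank_ker mxrank_scale_nz ?invr_eq0.
Qed.

Lemma mul_signed_lap eps (v : 'rV[R]_n) j :
  (v *m signed_lap eps) 0 j = v 0 j * udeg j + eps * \sum_i v 0 i * uadj i j.
Proof.
rewrite [eps * _]mulr_sumr mxE -(sum_delta j (fun i => v 0 i * udeg i)) -big_split /=.
by apply: eq_bigr => i _; rewrite mxE; ring.
Qed.

Definition balanced (eps : R) (v : 'rV[R]_n) :=
  forall i j, urel E i j -> v 0 i + eps * v 0 j = 0.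

Lemma signed_lap_form eps (v : 'rV[R]_n) : eps ^+ 2 = 1 ->
  \sum_i \sum_j uadj i j * (v 0 i + eps * v 0 j) ^+ 2 =
  2 * \sum_j (v *m signed_lap eps) 0 j * v 0 j.
Proof.
move=> eps2.
pose diag_part := \sum_i \sum_j uadj i j * v 0 i ^+ 2.
pose cross_part := \sum_i \sum_j v 0 i * uadj i j * v 0 j.
have expand i j : uadj i j * (v 0 i + eps * v 0 j) ^+ 2 =
    uadj i j * v 0 i ^+ 2 + uadj j i * v 0 j ^+ 2 + 2 * eps * (v 0 i * uadj i j * v 0 j).
  by rewrite -uadj_sym sqrrD exprMn eps2; ring.
have -> : \sum_i \sum_j uadj i j * (v 0 i + eps * v 0 j) ^+ 2 =
    diag_part + diag_part + 2 * eps * cross_part.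
  under eq_bigr => i _ do under eq_bigr => j _ do rewrite expand.
  under eq_bigr => i _ do rewrite !big_split /=.
  rewrite !big_split /= [in X in _ + X + _]exchange_big /= /cross_part mulr_sumr.
  by under [in RHS]eq_bigr => i _ do rewrite mulr_sumr.
have -> : \sum_j (v *m signed_lap eps) 0 j * v 0 j = diag_part + eps * cross_part.
  under eq_bigr => j _ do rewrite mul_signed_lap mulrDl.
  rewrite big_split /=; congr (_ + _).
    apply: eq_bigr => j _; rewrite /udeg mulr_sumr mulr_suml.
    by apply: eq_bigr => k _; ring.
  rewrite /cross_part exchange_big mulr_sumr; apply: eq_bigr => j _.
  rewrite -mulrA mulr_suml mulr_sumr; apply: eq_bigr => i _; ring.
ring.
Qed.

(* Over an ordered field a vanishing sum of squares vanishes termwise, so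
   every kernel vector of L(eps) is eps-balanced ... *)
Lemma kermx_balanced eps (v : 'rV[R]_n) : eps ^+ 2 = 1 ->
  v *m signed_lap eps = 0 -> balanced eps v.
Proof.
move=> eps2 vL i j eij.
have term_ge0 k l : 0 <= uadj k l * (v 0 k + eps * v 0 l) ^+ 2.
  by rewrite mulr_ge0 ?sqr_ge0 ?ler0n.
have form0 : \sum_k \sum_l uadj k l * (v 0 k + eps * v 0 l) ^+ 2 = 0.
  by rewrite signed_lap_form // vL big1 ?mulr0 // => k _; rewrite mxE mul0r.
have row_sum0 := psumr_eq0P (fun k _ => sumr_ge0 _ (fun l _ => term_ge0 k l)) form0.
have /eqP : uadj i j * (v 0 i + eps * v 0 j) ^+ 2 = 0.
  exact: psumr_eq0P (fun l _ => term_ge0 i l) (row_sum0 i isT) _ isT.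
by rewrite /uadj eij mul1r sqrf_eq0 => /eqP.
Qed.

Lemma balanced_kermx eps (v : 'rV[R]_n) : eps ^+ 2 = 1 ->
  balanced eps v -> v *m signed_lap eps = 0.
Proof.
move=> eps2 bal; apply/rowP => j; rewrite mul_signed_lap mxE.
have -> : \sum_i v 0 i * uadj i j = - eps * v 0 j * udeg j.
  rewrite /udeg mulr_sumr; apply: eq_bigr => i _; rewrite uadj_sym.
  have [eij | neij] := boolP (urel E i j); last first.
    by rewrite uadj0 ?mulr0 // urel_sym.
  by rewrite -(addrK (eps * v 0 j) (v 0 i)) bal // sub0r -mulNr.
transitivity (v 0 j * udeg j * (1 - eps ^+ 2)); first by ring.
by rewrite eps2 subrr mulr0.
Qed.

Section ComponentBasis.
(* An explicit basis of the kernel of L(eps), one vector per root in C: the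
   vector supported on the component of c with entries sg. *)
Variables (eps : R) (C : {set 'I_n}) (sg : 'I_n -> R).
Hypothesis eps2 : eps ^+ 2 = 1.
Hypothesis C_roots : forall c, c \in C -> croot c = c.
Hypothesis sg_root : forall c, c \in C -> sg c = 1.
Hypothesis sg_edge : forall i j, urel E i j -> croot j \in C -> sg i = - eps * sg j.
Hypothesis balanced_span : forall v, balanced eps v ->
  forall j, v 0 j = if croot j \in C then sg j * v 0 (croot j) else 0.

Definition comp_basis : 'M[R]_(#|C|, n) :=
  \matrix_(c, j) ((croot j == enum_val c)%:R * sg j).

Definition root_coord : 'M[R]_(n, #|C|) := \matrix_(j, c) (j == enum_val c)%:R.

Lemma root_coordE (v : 'rV[R]_n) c : (v *m root_coord) 0 c = v 0 (enum_val c).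
Proof.
rewrite mxE -(sum_delta (enum_val c) (fun i => v 0 i)).
by apply: eq_bigr => i _; rewrite mxE mulrC.
Qed.

Lemma comp_basis_root_coord : comp_basis *m root_coord = 1%:M.
Proof.
apply/matrixP => c c'.
have -> : (comp_basis *m root_coord) c c' = (row c comp_basis *m root_coord) 0 c'.
  by rewrite -row_mul [RHS]mxE.
rewrite root_coordE !mxE.
rewrite C_roots ?sg_root ?enum_valP // mulr1.
by rewrite (inj_eq enum_val_inj) eq_sym.
Qed.

Lemma comp_basis_balanced c : balanced eps (row c comp_basis).
Proof.
move=> i j eij; rewrite !mxE (croot_edge eij).
case: eqP => [rj | _]; last by rewrite !mul0r mulr0 addr0.
by rewrite (sg_edge eij) ?rj ?enum_valP // !mul1r mulNr addNr.
Qed.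

Lemma comp_basis_span (v : 'rV[R]_n) :
  balanced eps v -> v = v *m root_coord *m comp_basis.
Proof.
move=> bal; apply/rowP => j; rewrite balanced_span // mxE.
under eq_bigr => c _ do rewrite root_coordE mxE.
case: ifP => rC; last first.
  rewrite big1 // => c _; case: eqP => [rc | _]; last by rewrite mul0r mulr0.
  by move: rC; rewrite rc enum_valP.
pose c0 := enum_rank_in rC (croot j).
have c0E : enum_val c0 = croot j by rewrite enum_rankK_in.
rewrite (bigD1 c0) //= c0E eqxx mul1r big1 ?addr0; first by rewrite mulrC.
move=> c /negbTE nc; rewrite -c0E (inj_eq enum_val_inj) eq_sym nc.
by rewrite mul0r mulr0.
Qed.

Lemma rank_kermx_signed_lap : \rank (kermx (signed_lap eps)) = #|C|.
Proof.
apply: (rank_kermx_basis comp_basis_root_coord).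
  apply/row_matrixP => c; rewrite row_mul row0.
  exact/(balanced_kermx eps2)/comp_basis_balanced.
by move=> v /(kermx_balanced eps2); apply: comp_basis_span.
Qed.

End ComponentBasis.

(* Kernel of the Laplacian: balanced vectors are constant on components, so
   the basis is indexed by all components. *)
Lemma rank_kermx_laplacian : \rank (kermx (signed_lap (-1))) = num_ucomp E.
Proof.
apply: (@rank_kermx_signed_lap _ _ (fun _ => 1)) => //.
- by rewrite sqrrN expr1n.
- by move=> c; rewrite mem_ucomp_roots => /eqP.
- by move=> i j _ _; rewrite opprK mulr1.
move=> v bal j; rewrite (croot_ucomp_roots E) mul1r.
apply: (connect_ind (P := fun y => v 0 y = v 0 (croot j))) (connect_croot E j) => //.
by move=> x y _ /bal/eqP; rewrite mulN1r subr_eq0 => /eqP <-.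
Qed.

Definition bool_sign (b : bool) : R := if b then 1 else -1.

Definition colour_sign j : R :=
  let r := croot j in bool_sign (bip_colouring E r j == bip_colouring E r r).

Lemma sign_flip (a b c : bool) : a != b ->
  bool_sign (a == c) = - bool_sign (b == c).
Proof. by rewrite /bool_sign; case: a; case: b; case: c => //= _; rewrite opprK. Qed.

Lemma signless_edge (v : 'rV[R]_n) : balanced 1 v ->
  forall x y, urel E x y -> v 0 y = - v 0 x.
Proof.
move=> bal x y /bal/eqP; rewrite mul1r addr_eq0 => /eqP ->.
by rewrite opprK.
Qed.

Lemma signless_pm (v : 'rV[R]_n) r y : balanced 1 v -> connect (urel E) r y ->
  (v 0 y == v 0 r) || (v 0 y == - v 0 r).
Proof.
move=> bal; apply: (connect_ind (P := fun y => (v 0 y == v 0 r) || (v 0 y == - v 0 r))).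
  by rewrite eqxx.
by move=> x z _ exz; rewrite (signless_edge bal exz) eqr_opp eqr_oppLR orbC.
Qed.

(* ... is nonzero at r only if the component of r is bipartite (colour by sign), *)
Lemma signless_bipartite (v : 'rV[R]_n) r : balanced 1 v -> v 0 r != 0 ->
  bip_comp E r.
Proof.
move=> bal vr0; apply/existsP; exists [ffun i => 0 < v 0 i].
apply/forallP => i; apply/forallP => k; apply/implyP => /andP [ri eik].
rewrite !ffunE (signless_edge bal eik) oppr_gt0.
have vi0 : v 0 i != 0.
  by case/orP: (signless_pm bal ri) => /eqP ->; rewrite ?oppr_eq0.
by case: ltrgtP vi0.
Qed.

Lemma signless_colour (v : 'rV[R]_n) r y : balanced 1 v -> bip_comp E r ->
  connect (urel E) r y ->
  v 0 y = bool_sign (bip_colouring E r y == bip_colouring E r r) * v 0 r.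
Proof.
move=> bal bip; pose col := bip_colouring E r.
apply: (connect_ind (P := fun y => v 0 y = bool_sign (col y == col r) * v 0 r)).
  by rewrite eqxx /bool_sign mul1r.
move=> x z rx exz vx; rewrite (signless_edge bal exz) vx -mulNr.
by rewrite (sign_flip _ (bip_colouringP bip rx exz)) opprK.
Qed.

Lemma rank_kermx_signless : \rank (kermx (signed_lap 1)) = num_bip_ucomp E.
Proof.
apply: (@rank_kermx_signed_lap _ _ colour_sign) => //.
- by rewrite expr1n.
- by move=> c; rewrite inE mem_ucomp_roots => /andP [/eqP].
- move=> c; rewrite inE mem_ucomp_roots => /andP [/eqP rc _].
  by rewrite /colour_sign rc eqxx.
- move=> i j eij; rewrite inE /colour_sign (croot_edge eij) mulN1r => /andP [_ bip].
  have ri : connect (urel E) (croot j) i by rewrite -(croot_edge eij) connect_croot.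
  exact/sign_flip/(bip_colouringP bip ri eij).
move=> v bal j; rewrite inE (croot_ucomp_roots E) /=; case: ifP => [bip | nbip].
  exact: signless_colour bal bip (connect_croot E j).
have vr0 : v 0 (croot j) = 0.
  by apply/eqP; apply: contraFT nbip; apply: signless_bipartite.
by case/orP: (signless_pm bal (connect_croot E j)) => /eqP ->; rewrite vr0 ?oppr0.
Qed.

End SignedLaplacian.

Unset Implicit Arguments.

Theorem proposition4p1 (R : realFieldType) (n : nat) (E : rel 'I_n)
  (hn : (0 < n)%N) (hloop : irreflexive E) (tau : R)
  (htau0 : 0 < tau) (htau1 : tau <= 1) :
  [/\ is_eigenvalue (Mtau E tau) tau^-1,
      geom_mult (Mtau E tau) tau^-1 = num_ucomp E,
      is_eigenvalue (Mtau E tau) (- tau^-1) <-> (0 < num_bip_ucomp E)%N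
    & (0 < num_bip_ucomp E)%N ->
      geom_mult (Mtau E tau) (- tau^-1) = num_bip_ucomp E].
Proof.
have tau0 : tau != 0 by rewrite gt_eqF.
have mult_pos : geom_mult (Mtau E tau) tau^-1 = num_ucomp E.
  by rewrite -[tau^-1]mul1r geom_mult_unit_root ?expr1n // rank_kermx_laplacian.
have mult_neg : geom_mult (Mtau E tau) (- tau^-1) = num_bip_ucomp E.
  rewrite -mulN1r geom_mult_unit_root ?sqrrN ?expr1n // opprK.
  exact: rank_kermx_signless.
have comp_pos : (0 < num_ucomp E)%N.
  apply/card_gt0P; exists (fingraph.root (urel E) (Ordinal hn)).
  exact: croot_ucomp_roots.
split=> //; first by apply/eigenvalue_geom_mult; rewrite mult_pos.
by rewrite -mult_neg; apply: eigenvalue_geom_mult.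
Qed.
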